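(* Let $n,k,t$ be positive integers with $k<n$, $q$ a prime power, and $\mathcal{D}$ the Desarguesian $(t-1)$-spread of $\mathrm{PG}(nt-1,q)$. Let $\Omega$ be an $(nt-kt-2)$-dimensional subspace of $\mathrm{PG}(nt-1,q)$, let $\Gamma$ be a plane skew from $\Omega$, let $\bar{B}$ be a blocking set (with respect to lines) of the plane $\Gamma$, and let $K$ be the cone with vertex $\Omega$ and base $\bar{B}$. Then $\mathcal{B}(K)$ is a blocking set with respect to $(k-1)$-dimensional subspaces of $\mathrm{PG}(n-1,q^t)$.
   Context: Field reduction: each point of $\mathrm{PG}(n-1,q^t)$ corresponds to a $(t-1)$-dimensional subspace of $\mathrm{PG}(nt-1,q)$ (the $1$-dimensional $\mathbb{F}_{q^t}$-subspace viewed over $\mathbb{F}_q$); these form the Desarguesian $(t-1)$-spread $\mathcal{D}$. For $U\subseteq\mathrm{PG}(nt-1,q)$, $\mathcal{B}(U)$ is the set of elements of $\mathcal{D}$ meeting $U$, identified with points of $\mathrm{PG}(n-1,q^t)$. The cone with vertex $\Omega$ and base $\bar{B}$ (in a subspace skew from $\Omega$) is $\bigcup_{P\in\bar B}\langle P,\Omega\rangle$. A blocking set with respect to $j$-spaces is a point set meeting every $j$-dimensional subspace. *)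

From HB Require Import structures.
From mathcomp Require Import all_boot all_order all_algebra all_field.
Set Implicit Arguments. Unset Strict Implicit. Unset Printing Implicit Defensive.
Import GRing.Theory.
Local Open Scope ring_scope.

(* Field reduction setting: F = F_q (a finite field), L = F_{q^t} given as a
   field extension of F of degree t.  The vector space underlying
   PG(n-1,q^t) is V = L^n = 'rV[L]_n; viewed over F it is the
   nt-dimensional space underlying PG(nt-1,q).
   Subspaces are represented by their underlying sets of vectors (containing 0);
   a projective d-space is a vector subspace of (vector) dimension d+1. *)

Section FieldReduction.
Variables (F : finFieldType) (L : fieldExtType F) (n : nat).
Local Notation V := 'rV[L]_n.

Definition Fspan (vs : seq V) : V -> Prop :=
  fun w => exists c : 'I_(size vs) -> F,
    w = \sum_(i < size vs) ((c i)%:A : L) *: vs`_i.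

Definition Ffree (vs : seq V) : Prop :=
  forall c : 'I_(size vs) -> F,
    \sum_(i < size vs) ((c i)%:A : L) *: vs`_i = 0 -> forall i, c i = 0.

Definition Fsubspace_vdim (S : V -> Prop) (m : nat) : Prop :=
  exists vs : seq V, size vs = m /\ Ffree vs /\ (forall w, S w <-> Fspan vs w).

(* A point set of PG(nt-1,q) is given by a predicate on vectors; the point
   <p>_F belongs to it iff p is nonzero and satisfies the predicate. *)

Definition blocking_set_of_plane (Gamma B : V -> Prop) : Prop :=
  (forall p, B p -> p != 0 -> Gamma p) /\
  (forall l : V -> Prop, Fsubspace_vdim l 2 -> (forall w, l w -> Gamma w) ->
     exists p, p != 0 /\ B p /\ l p).

Definition cone (Omega B : V -> Prop) : V -> Prop :=
  fun w => exists p, p != 0 /\ B p /\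
    exists a : F, exists o, Omega o /\ w = (a%:A : L) *: p + o.

(* B(U): the Desarguesian spread elements (= points <v>_L of PG(n-1,q^t))
   meeting U; the point <v>_L (v != 0) belongs to B(U) iff its F-subspace
   {c v | c in L} contains a nonzero vector of U. *)
Definition inB (U : V -> Prop) (v : V) : Prop :=
  v != 0 /\ exists w, w != 0 /\ U w /\ exists c : L, w = c *: v.

Definition blocking_wrt (P : V -> Prop) (k : nat) : Prop :=
  forall Pi : {vspace V}, \dim Pi = k -> exists v, P v /\ v \in Pi.

End FieldReduction.

From HB Require Import structures.
From mathcomp Require Import all_boot all_order all_algebra all_field.
From mathcomp Require Import zify.
Set Implicit Arguments. Unset Strict Implicit. Unset Printing Implicit Defensive.
Import GRing.Theory.
Local Open Scope ring_scope.

(* View L^n as an F-space W of dimension nt.  The k-space Pi of PG(n-1,q^t)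
   becomes an F-space P of dimension kt, the vertex Omega has dimension
   nt - kt - 1 and the plane Gamma dimension 3.  If P meets Omega, a point
   of Omega (lying in the cone) is in Pi.  Otherwise Omega + P is a
   hyperplane of W, so it meets Gamma in at least a line; that line contains
   a point p of the blocking set, and writing p = o + m with o in Omega and
   m in P gives a nonzero m = p - o on the line <p, Omega> of the cone. *)

Section SubspaceDimension.
Variables (K : fieldType) (vT : vectType K).

Lemma exists_subv_dim (U : {vspace vT}) m : (m <= \dim U)%N ->
  exists2 S : {vspace vT}, \dim S = m & (S <= U)%VS.
Proof.
move=> lemU; exists <<take m (vbasis U)>>%VS.
  have freeX : free (take m (vbasis U)).
    apply: (catl_free (Y := drop m (vbasis U))).
    by rewrite cat_take_drop; apply: basis_free (vbasisP U).
  by rewrite (eqP freeX) size_takel // size_tuple.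
by apply/span_subvP => x /mem_take; apply: vbasis_mem.
Qed.

Lemma exists_subv_cap_dim (U U' : {vspace vT}) m :
    (\dim {:vT} + m <= \dim U + \dim U')%N ->
  exists2 S : {vspace vT}, \dim S = m & (S <= U :&: U')%VS.
Proof.
move=> le_dim; apply: exists_subv_dim; rewrite -(leq_add2l (\dim (U + U'))).
by rewrite dimv_sum_cap (leq_trans _ le_dim) // leq_add2r dimvS ?subvf.
Qed.

End SubspaceDimension.

Section Cone.
Variables (F : finFieldType) (L : fieldExtType F) (n : nat).
Variables (Omega Bbar : 'rV[L]_n -> Prop).

Lemma inB_self (U : 'rV[L]_n -> Prop) v : v != 0 -> U v -> inB U v.
Proof. by move=> nz_v Uv; split=> //; exists v; split=> //; split=> //; exists 1; rewrite scale1r. Qed.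

Lemma cone_vertex p o : p != 0 -> Bbar p -> Omega o -> cone Omega Bbar o.
Proof. by move=> nz_p Bp Oo; exists p; do 2!split=> //; exists 0, o; rewrite scale0r scale0r add0r. Qed.

Lemma cone_base_add p o : p != 0 -> Bbar p -> Omega o -> cone Omega Bbar (p + o).
Proof. by move=> nz_p Bp Oo; exists p; do 2!split=> //; exists 1, o; rewrite !scale1r. Qed.

End Cone.

Section FieldReduction.
Variables (F : finFieldType) (L : fieldExtType F) (n : nat).
Local Notation V := 'rV[L]_n.
Local Notation W := {ffun 'I_n -> L}.

(* 'rV[L]_n has no F-vector space structure, so we transport to the F-space of
   finite functions 'I_n -> L. *)
Definition toW (v : V) : W := [ffun i => v 0 i].
Definition ofW (w : W) : V := \row_i w i.

Lemma toWK : cancel toW ofW.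
Proof. by move=> v; apply/rowP=> i; rewrite mxE ffunE. Qed.

Lemma ofWK : cancel ofW toW.
Proof. by move=> w; apply/ffunP=> i; rewrite !ffunE mxE. Qed.

Lemma toW0 : toW 0 = 0.
Proof. by apply/ffunP=> i; rewrite !ffunE mxE. Qed.

Lemma toW_eq0 v : (toW v == 0) = (v == 0).
Proof. by apply/eqP/eqP => [|->]; [rewrite -toW0 => /(can_inj toWK) | exact: toW0]. Qed.

Lemma toWD u v : toW (u + v) = toW u + toW v.
Proof. by apply/ffunP=> i; rewrite !ffunE mxE. Qed.

Lemma toW_sum m (c : 'I_m -> F) (f : 'I_m -> V) :
  toW (\sum_(i < m) ((c i)%:A : L) *: f i) = \sum_(i < m) c i *: toW (f i).
Proof.
elim/big_rec2: _ => [|i _ w _ <-]; first exact: toW0.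
by rewrite toWD; congr (_ + _); apply/ffunP=> j; rewrite !ffunE mxE mulr_algl.
Qed.

Lemma dimvf_W t : \dim {:L} = t -> \dim {:W} = (n * t)%N.
Proof. by move=> dimL; rewrite dimvf /dim /= card_ord -dimL dimvf. Qed.

Lemma nth_map_toW (vs : seq V) i : (map toW vs)`_i = toW vs`_i.
Proof.
by case: (ltnP i (size vs)) => lt_i; [rewrite (nth_map 0) | rewrite !nth_default ?size_map ?toW0].
Qed.

Lemma Fspan_vspaceP (vs : seq V) v : Fspan vs v <-> toW v \in <<map toW vs>>%VS.
Proof.
split=> [[c ->] | span_v].
  rewrite toW_sum; apply: memv_suml => i _; apply: memvZ.
  by rewrite -nth_map_toW memv_span ?mem_nth ?size_map.
have /coord_span {}span_v : toW v \in <<map_tuple toW (in_tuple vs)>>%VS by [].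
exists (fun i => coord (map_tuple toW (in_tuple vs)) i (toW v)).
by apply: (can_inj toWK); rewrite toW_sum {1}span_v; apply: eq_bigr => i _; rewrite nth_map_toW.
Qed.

Lemma Ffree_freeP (vs : seq V) : Ffree vs <-> free (map toW vs).
Proof.
have freeP_vs := @freeP _ _ _ (map_tuple toW (in_tuple vs)).
split=> [free_vs | /freeP_vs free_ws c sum0].
  apply/freeP_vs => c sum0; apply: free_vs; apply: (can_inj toWK).
  by rewrite toW_sum toW0 -[RHS]sum0; apply: eq_bigr => i _; rewrite nth_map_toW.
apply: free_ws; rewrite -[RHS]toW0 -sum0 toW_sum.
by apply: eq_bigr => i _; rewrite nth_map_toW.
Qed.

Lemma Fsubspace_vdim_vspace (S : V -> Prop) m : Fsubspace_vdim S m ->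
  exists2 U : {vspace W}, \dim U = m & forall v, S v <-> toW v \in U.
Proof.
case=> vs [size_vs [/Ffree_freeP free_vs S_span]]; exists <<map toW vs>>%VS.
  by rewrite (eqP free_vs) size_map.
by move=> v; rewrite S_span; apply: Fspan_vspaceP.
Qed.

Lemma vspace_Fsubspace_vdim (U : {vspace W}) :
  Fsubspace_vdim (fun v => toW v \in U) (\dim U).
Proof.
exists (map ofW (vbasis U)); rewrite size_map size_tuple.
have toW_ofW_basis : map toW (map ofW (vbasis U)) = vbasis U.
  by rewrite -map_comp (eq_map ofWK) map_id.
split=> //; split; first by apply/Ffree_freeP; rewrite toW_ofW_basis (basis_free (vbasisP U)).
by move=> v; rewrite Fspan_vspaceP toW_ofW_basis (span_basis (vbasisP U)).
Qed.

Section RestrictScalars.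
Variable Pi : {vspace V}.
Local Notation D := {ffun 'I_(\dim Pi) -> L}.

Definition Pi_coord (c : D) : W := toW (\sum_i c i *: (vbasis Pi)`_i).

Lemma Pi_coord_is_linear : linear Pi_coord.
Proof.
move=> a u v; apply/ffunP => j; rewrite !ffunE !summxE scaler_sumr -big_split /=.
by apply: eq_bigr => i _; rewrite !mxE !ffunE mulrDl scalerAl.
Qed.
HB.instance Definition _ := GRing.isLinear.Build F D W _ Pi_coord Pi_coord_is_linear.

Lemma lker_Pi_coord : lker (linfun Pi_coord) = 0%VS.
Proof.
apply/eqP; rewrite -subv0; apply/subvP => c; rewrite memv_ker lfunE memv0 toW_eq0.
move/eqP => sum0; have /freeP/(_ _ sum0) c0 := basis_free (vbasisP Pi).
by apply/eqP/ffunP => i; rewrite c0 ffunE.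
Qed.

Lemma restrict_scalars_vspace t : \dim {:L} = t ->
  exists2 P : {vspace W}, \dim P = (\dim Pi * t)%N &
    forall w, w \in P -> ofW w \in Pi.
Proof.
move=> dimL; exists (limg (linfun Pi_coord)).
  by rewrite limg_dim_eq ?lker_Pi_coord ?capv0 // dimvf /dim /= card_ord -dimL dimvf.
move=> _ /memv_imgP [c _ ->]; rewrite lfunE /= /Pi_coord toWK.
by apply: memv_suml => i _; rewrite memvZ ?vbasis_mem ?mem_nth ?size_tuple.
Qed.

End RestrictScalars.

Lemma skew_vspace_cap0 (S S' : V -> Prop) (U U' : {vspace W}) :
    (forall v, S v <-> toW v \in U) -> (forall v, S' v <-> toW v \in U') ->
    (forall v, S v -> S' v -> v = 0) ->
  (U :&: U' = 0)%VS.
Proof.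
move=> memU memU' skew; apply/eqP; rewrite -subv0; apply/subvP => w.
rewrite memv_cap memv0 -[w]ofWK => /andP[/memU /skew S'_w /memU' /S'_w ->].
by rewrite toW0.
Qed.

Lemma blocking_set_vspace_line (Gamma Bbar : V -> Prop) (Ga : {vspace W}) :
    (forall v, Gamma v <-> toW v \in Ga) -> blocking_set_of_plane Gamma Bbar ->
  forall l : {vspace W}, \dim l = 2 -> (l <= Ga)%VS ->
  exists p, [/\ p != 0, Bbar p & toW p \in l].
Proof.
move=> memGa [_ block] l dim_l /subvP sub_l_Ga.
have := vspace_Fsubspace_vdim l; rewrite dim_l => /block[w /sub_l_Ga|p].
  by rewrite memGa.
by case=> nz_p [Bp lp]; exists p.
Qed.

Section ConeVspace.
Variables (Omega Bbar : V -> Prop) (Om : {vspace W}).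
Hypothesis memOm : forall v, Omega v <-> toW v \in Om.
Variable p : V.
Hypotheses (nz_p : p != 0) (Bp : Bbar p).

Lemma inB_cone_vertex w : w \in Om -> w != 0 -> inB (cone Omega Bbar) (ofW w).
Proof.
move=> Om_w nz_w; apply: inB_self; first by rewrite -toW_eq0 ofWK.
by apply: (cone_vertex nz_p Bp); rewrite memOm ofWK.
Qed.

Lemma inB_cone_base_sub o : o \in Om -> toW p != o ->
  inB (cone Omega Bbar) (ofW (toW p - o)).
Proof.
move=> Om_o neq_po; apply: inB_self; first by rewrite -toW_eq0 ofWK subr_eq0.
have -> : ofW (toW p - o) = p + ofW (- o) by apply: (can_inj toWK); rewrite toWD !ofWK.
by apply: cone_base_add; rewrite // memOm ofWK memvN.
Qed.

End ConeVspace.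
End FieldReduction.

Theorem lemma4p1 (F : finFieldType) (L : fieldExtType F) (n k t : nat)
  (hn : (0 < n)%N) (hk : (0 < k)%N) (ht : (0 < t)%N) (hkn : (k < n)%N)
  (hL : \dim (fullv : {vspace L}) = t)
  (Omega Gamma Bbar : 'rV[L]_n -> Prop)
  (hOmega : Fsubspace_vdim Omega ((n - k) * t - 1))
  (hGamma : Fsubspace_vdim Gamma 3)
  (hskew : forall w, Omega w -> Gamma w -> w = 0)
  (hB : blocking_set_of_plane Gamma Bbar) :
  blocking_wrt (inB (cone Omega Bbar)) k.
Proof.
move=> Pi dimPi.
have [Om dimOm memOm] := Fsubspace_vdim_vspace hOmega.
have [Ga dimGa memGa] := Fsubspace_vdim_vspace hGamma.
have [P dimP sub_P_Pi] := restrict_scalars_vspace Pi hL; rewrite dimPi in dimP.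
have block := blocking_set_vspace_line memGa hB.
have OmGa0 := skew_vspace_cap0 memOm memGa hskew.
have [l0 dim_l0 sub_l0_Ga] : exists2 l0 : {vspace _}, \dim l0 = 2 & (l0 <= Ga)%VS.
  by apply: exists_subv_dim; rewrite dimGa.
have [p0 [nz_p0 Bp0 _]] := block l0 dim_l0 sub_l0_Ga.
have [POm0 | PO_nz] := eqVneq (P :&: Om)%VS 0%VS; last first.
  have := memv_pick (P :&: Om); rewrite memv_cap => /andP[wP wOm].
  exists (ofW (vpick (P :&: Om))); split; last exact: sub_P_Pi wP.
  by apply: (inB_cone_vertex memOm nz_p0 Bp0 wOm); rewrite vpick0.
have [l dim_l sub_l] : exists2 l : {vspace _}, \dim l = 2 & (l <= (Om + P) :&: Ga)%VS.
  apply: exists_subv_cap_dim.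
  rewrite dimv_disjoint_sum 1?capvC // dimOm dimP dimGa (dimvf_W n hL).
  rewrite -[in (n * t)%N](subnK (ltnW hkn)) mulnDl.
  have : (0 < (n - k) * t)%N by rewrite muln_gt0 subn_gt0 hkn.
  lia.
have [p [nz_p Bp lp]] := block l dim_l (subv_trans sub_l (capvSr _ _)).
have := subvP sub_l _ lp; rewrite memv_cap => /andP[/memv_addP[o Om_o [m Pm def_p]] Ga_p].
have def_m : m = toW p - o by rewrite def_p addrC addKr.
exists (ofW m); split; last exact: sub_P_Pi.
rewrite def_m; apply: (inB_cone_base_sub memOm nz_p Bp Om_o).
apply: contra nz_p => /eqP p_o.
by rewrite -toW_eq0 -memv0 -OmGa0 memv_cap Ga_p p_o Om_o.
Qed.
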